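(* Let $(M,d)$ be a pointed metric space, let $\gamma\in(0,1]$, let $A\subseteq\widetilde M$, and let $u,v\in M$ with $u\ne v$. Then $A\cup\{(u,v)\}$ is $\gamma$-cyclically monotonic if and only if there exists $f\in B_{\mathrm{Lip}_0(M)}$ such that $f(m_{x,y})\ge\gamma$ for all $(x,y)\in A$, and $f(y)-f(x)+\gamma d(u,v)\le d(x,u)+d(y,v)$ for all $x,y\in\pi(A)$.
   Context: $M$ has base point $0$; $\mathrm{Lip}_0(M)$ is the real Banach space of Lipschitz $f\colon M\to\mathbb R$ with $f(0)=0$, normed by the best Lipschitz constant, with unit ball $B_{\mathrm{Lip}_0(M)}$. $\widetilde M=\{(x,y)\in M\times M:x\ne y\}$ and $f(m_{x,y})=(f(x)-f(y))/d(x,y)$. For $A\subseteq\widetilde M$, $\pi(A)=\{x\in M:\exists y\in M,\ (x,y)\in A\text{ or }(y,x)\in A\}$. For $\gamma\in(0,1]$, $A\subseteq\widetilde M$ is $\gamma$-cyclically monotonic if for every finite sequence $(x_1,y_1),\dots,(x_n,y_n)\in A$, with $y_{n+1}=y_1$, $\sum_{i=1}^n\min\{d(x_i,y_{i+1})-\gamma d(x_i,y_i),\,d(y_i,y_{i+1})\}\ge0$. *)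

From Stdlib Require Import Reals List.
Open Scope R_scope.

(* A pointed metric space (M, d) with base point [base] (the point 0). *)
Record PointedMetricSpace := {
  pt :> Type;
  mdist : pt -> pt -> R;
  base : pt;
  dist_nonneg : forall x y, 0 <= mdist x y;
  dist_eq0 : forall x y, mdist x y = 0 <-> x = y;
  dist_sym : forall x y, mdist x y = mdist y x;
  dist_tri : forall x y z, mdist x z <= mdist x y + mdist y z
}.

Section Defs.
Variable M : PointedMetricSpace.

Definition pairset := (pt M * pt M)%type -> Prop.

Definition subset_tilde (A : pairset) : Prop :=
  forall p, A p -> fst p <> snd p.

Definition in_Lip0_ball (f : pt M -> R) : Prop :=
  f (base M) = 0 /\ forall x y, Rabs (f x - f y) <= mdist M x y.

Definition mol (f : pt M -> R) (x y : pt M) : R :=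
  (f x - f y) / mdist M x y.

Definition proj (A : pairset) (x : pt M) : Prop :=
  exists y, A (x, y) \/ A (y, x).

Definition cm_term (gamma : R) (x y ynext : pt M) : R :=
  Rmin (mdist M x ynext - gamma * mdist M x y) (mdist M y ynext).

(* cyc_aux gamma y1 l: sum of the summands over l, where the last element's
   successor y is y1 (i.e. y_{n+1} = y_1). *)
Fixpoint cyc_aux (gamma : R) (y1 : pt M) (l : list (pt M * pt M)) : R :=
  match l with
  | nil => 0
  | (x, y) :: rest =>
      let ynext := match rest with nil => y1 | (_, y') :: _ => y' end in
      cm_term gamma x y ynext + cyc_aux gamma y1 rest
  end.

Definition cyc_sum (gamma : R) (l : list (pt M * pt M)) : R :=
  match l with
  | nil => 0
  | (x, y) :: _ => cyc_aux gamma y l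
  end.

Definition gamma_cyc_mon (gamma : R) (A : pairset) : Prop :=
  forall l : list (pt M * pt M),
    (forall p, In p l -> A p) -> 0 <= cyc_sum gamma l.

Definition add_pair (A : pairset) (u v : pt M) : pairset :=
  fun p => A p \/ p = (u, v).

End Defs.

(* Forward direction: by a Rockafellar-type construction, a γ-cyclically
   monotonic set P carries a 1-Lipschitz potential f with
   f x - f y >= γ d(x,y) on P; applied to P = A ∪ {(u,v)}, the pair (u,v)
   together with the Lipschitz property yields the cross inequality.
   Backward direction: the cross inequality leaves room for a value a that
   can be assigned to the pair (u,v), while every pair (x,y) of A gets the
   value f(y); each summand of a cyclic sum then dominates the difference of
   the values of consecutive pairs, so the cyclic sum telescopes to a
   nonnegative quantity. *)

From Pilot Require Import Defs.
From Stdlib Require Import Reals List Lra Classical ClassicalEpsilon.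
Open Scope R_scope.

Lemma exists_between {T : Type} (Q : T -> Prop) (lo hi : T -> R) :
  (forall z w, Q z -> Q w -> lo z <= hi w) ->
  exists a, forall z, Q z -> lo z <= a <= hi z.
Proof.
  intros Hlohi.
  destruct (classic (exists z, Q z)) as [[z0 Hz0] | Hempty].
  - set (E := fun r => exists z, Q z /\ r = lo z).
    destruct (completeness E) as [a [Hub Hleast]].
    + exists (hi z0). intros r [z [Hz ->]]. exact (Hlohi z z0 Hz Hz0).
    + exists (lo z0), z0. auto.
    + exists a. intros z Hz. split.
      * apply Hub. exists z. auto.
      * apply Hleast. intros r [w [Hw ->]]. exact (Hlohi w z Hw Hz).
  - exists 0. intros z Hz. exfalso. apply Hempty. exists z. exact Hz.
Qed.

Section CyclicMonotonicity.

Variable M : PointedMetricSpace.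
Local Notation d := (mdist M).

Lemma dist_self (x : pt M) : d x x = 0.
Proof. apply Defs.dist_eq0. reflexivity. Qed.

Lemma dist_pos (x y : pt M) : x <> y -> 0 < d x y.
Proof.
  intros Hxy. destruct (Defs.dist_nonneg M x y) as [Hpos | Hzero]; [exact Hpos |].
  exfalso. apply Hxy, Defs.dist_eq0. symmetry. exact Hzero.
Qed.

Lemma Lip0_ball_diff_le (f : pt M -> R) :
  in_Lip0_ball M f -> forall x y, f x - f y <= d x y.
Proof.
  intros [_ Hlip] x y. eapply Rle_trans; [apply Rle_abs | apply Hlip].
Qed.

Lemma mol_ge_iff (f : pt M -> R) (g : R) (x y : pt M) :
  x <> y -> (mol M f x y >= g <-> g * d x y <= f x - f y).
Proof.
  intros Hxy. pose proof (dist_pos x y Hxy) as Hd. unfold mol. split; intros H.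
  - replace (f x - f y) with ((f x - f y) / d x y * d x y) by (field; lra).
    apply Rmult_le_compat_r; lra.
  - apply Rle_ge, (Rmult_le_reg_r (d x y)); [exact Hd |].
    replace ((f x - f y) / d x y * d x y) with (f x - f y) by (field; lra).
    exact H.
Qed.

Variable g : R.

Lemma cyc_aux_telescope (P : pairset M) (phi : pt M * pt M -> R) :
  (forall p q, P p -> P q -> phi p - phi q <= cm_term M g (fst p) (snd p) (snd q)) ->
  forall L q p, (forall r, In r L -> P r) -> P q -> P p ->
  phi p - phi q <= cyc_aux M g (snd q) (p :: L).
Proof.
  intros Hstep L. induction L as [| p' L IH]; intros q [x y] HL Hq Hp; simpl.
  - pose proof (Hstep (x, y) q Hp Hq). simpl in *. lra.
  - destruct p' as [x' y'].
    assert (Hp' : P (x', y')) by (apply HL; left; reflexivity).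
    pose proof (IH q (x', y') (fun r Hr => HL r (or_intror Hr)) Hq Hp').
    pose proof (Hstep (x, y) (x', y') Hp Hp'). simpl in *. lra.
Qed.

Lemma gamma_cyc_mon_of_potential (P : pairset M) (phi : pt M * pt M -> R) :
  (forall p q, P p -> P q -> phi p - phi q <= cm_term M g (fst p) (snd p) (snd q)) ->
  gamma_cyc_mon M g P.
Proof.
  intros Hstep [| [x y] L] HL; simpl; [lra |].
  assert (Hxy : P (x, y)) by (apply HL; left; reflexivity).
  pose proof (cyc_aux_telescope P phi Hstep L (x, y) (x, y)
                (fun r Hr => HL r (or_intror Hr)) Hxy Hxy).
  simpl in *. lra.
Qed.

(* [chain_cost o p [(x1,y1);...;(xn,yn)]] is the length of the path
   p -> y1 -> x1 -> y2 -> ... -> xn -> o in which each jump from y_i back to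
   x_i is credited with γ d(x_i,y_i). *)
Fixpoint chain_cost (o p : pt M) (L : list (pt M * pt M)) : R :=
  match L with
  | nil => d p o
  | (x, y) :: rest => d p y - g * d x y + chain_cost o x rest
  end.

Definition next_snd (y1 : pt M) (L : list (pt M * pt M)) : pt M :=
  match L with nil => y1 | (_, y) :: _ => y end.

Lemma cyc_aux_le_chain_cost (o y1 p : pt M) L :
  d p (next_snd y1 L) + cyc_aux M g y1 L <= chain_cost o p L + d o y1.
Proof.
  revert p. induction L as [| [x y] rest IH]; intros p; simpl.
  - pose proof (Defs.dist_tri M p o y1). lra.
  - specialize (IH x).
    assert (cm_term M g x y (next_snd y1 rest) <= d x (next_snd y1 rest) - g * d x y)
      by apply Rmin_l.
    destruct rest as [| [x' y'] rest]; simpl in *; lra.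
Qed.

Lemma chain_cost_lower_bound (P : pairset M) (o p : pt M) L :
  gamma_cyc_mon M g P -> (forall q, In q L -> P q) ->
  - d o p <= chain_cost o p L.
Proof.
  intros HP HL. destruct L as [| [x y] rest]; simpl.
  - pose proof (Defs.dist_nonneg M p o). pose proof (Defs.dist_nonneg M o p). lra.
  - pose proof (cyc_aux_le_chain_cost o y p ((x, y) :: rest)) as Hle.
    pose proof (HP _ HL) as Hcyc. pose proof (Defs.dist_tri M o p y).
    simpl in *. lra.
Qed.

Lemma chain_cost_lipschitz (o p q : pt M) L :
  chain_cost o p L <= d p q + chain_cost o q L.
Proof.
  destruct L as [| [x y] rest]; simpl.
  - pose proof (Defs.dist_tri M p q o). lra.
  - pose proof (Defs.dist_tri M p q y). lra.
Qed.

Lemma chain_cost_cons_pair (o x y : pt M) L :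
  chain_cost o y ((x, y) :: L) = - g * d x y + chain_cost o x L.
Proof. simpl. rewrite dist_self. ring. Qed.

Section Potential.

Variable P : pairset M.
Hypothesis HP : gamma_cyc_mon M g P.

Definition neg_chain_costs (p : pt M) (r : R) : Prop :=
  exists L, (forall q, In q L -> P q) /\ r = - chain_cost (base M) p L.

Lemma neg_chain_costs_bound (p : pt M) : bound (neg_chain_costs p).
Proof.
  exists (d (base M) p). intros r [L [HL ->]].
  pose proof (chain_cost_lower_bound P (base M) p L HP HL). lra.
Qed.

Lemma neg_chain_costs_inhabited (p : pt M) : exists r, neg_chain_costs p r.
Proof. exists (- chain_cost (base M) p nil), nil. split; [intros q [] | reflexivity]. Qed.

Definition potential (p : pt M) : R :=
  proj1_sig (completeness _ (neg_chain_costs_bound p) (neg_chain_costs_inhabited p)).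

Lemma potential_is_lub (p : pt M) : is_lub (neg_chain_costs p) (potential p).
Proof. exact (proj2_sig (completeness _ _ _)). Qed.

Lemma chain_cost_ge_potential (p : pt M) L :
  (forall q, In q L -> P q) -> - chain_cost (base M) p L <= potential p.
Proof. intros HL. apply potential_is_lub. exists L. auto. Qed.

Lemma potential_lipschitz (p q : pt M) : potential q <= potential p + d p q.
Proof.
  apply potential_is_lub. intros r [L [HL ->]].
  pose proof (chain_cost_ge_potential p L HL).
  pose proof (chain_cost_lipschitz (base M) p q L). lra.
Qed.

Lemma potential_pair (x y : pt M) : P (x, y) -> potential x + g * d x y <= potential y.
Proof.
  intros Hxy.
  enough (potential x <= potential y - g * d x y) by lra.
  apply potential_is_lub. intros r [L [HL ->]].
  assert (HL' : forall q, In q ((x, y) :: L) -> P q) by (intros q [<- | Hq]; auto).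
  pose proof (chain_cost_ge_potential y _ HL') as Hy.
  rewrite chain_cost_cons_pair in Hy. lra.
Qed.

End Potential.

Lemma Lip0_ball_of_gamma_cyc_mon (P : pairset M) :
  gamma_cyc_mon M g P ->
  exists f, in_Lip0_ball M f /\ forall x y, P (x, y) -> g * d x y <= f x - f y.
Proof.
  intros HP. exists (fun p => potential P HP (base M) - potential P HP p).
  split; [split |].
  - ring.
  - intros x y. pose proof (potential_lipschitz P HP x y).
    pose proof (potential_lipschitz P HP y x). pose proof (Defs.dist_sym M x y).
    apply Rabs_le. lra.
  - intros x y Hxy. pose proof (potential_pair P HP x y Hxy). lra.
Qed.

Section AddPair.

Variables (A : pairset M) (u v : pt M) (f : pt M -> R) (a : R).
Hypothesis Hg : g <= 1.
Hypothesis Hf : in_Lip0_ball M f.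
Hypothesis HA : forall x y, A (x, y) -> g * d x y <= f x - f y.
Hypothesis Ha : forall z, proj M A z -> f z - d z v <= a <= f z + cm_term M g u v z.

(* The value a plays the role of f at the pair (u,v), which may also lie in A. *)
Definition pair_potential (p : pt M * pt M) : R :=
  if excluded_middle_informative (p = (u, v)) then a else f (snd p).

Lemma pair_potential_step (p q : pt M * pt M) :
  add_pair M A u v p -> add_pair M A u v q ->
  pair_potential p - pair_potential q <= cm_term M g (fst p) (snd p) (snd q).
Proof.
  pose proof (Lip0_ball_diff_le f Hf) as Hlip.
  destruct p as [x y], q as [x' y']. intros Hp Hq. unfold pair_potential, cm_term; simpl.
  destruct (excluded_middle_informative ((x, y) = (u, v))) as [Ep | Ep];
  destruct (excluded_middle_informative ((x', y') = (u, v))) as [Eq | Eq].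
  - injection Ep as -> ->. injection Eq as -> ->. rewrite dist_self.
    pose proof (Defs.dist_nonneg M u v).
    apply Rmin_glb; nra.
  - injection Ep as -> ->. destruct Hq as [Hq | Hq]; [| contradiction].
    assert (Hy' : proj M A y') by (exists x'; right; exact Hq).
    pose proof (Ha y' Hy'). unfold cm_term in *. lra.
  - injection Eq as -> ->. destruct Hp as [Hp | Hp]; [| contradiction].
    assert (Hx : proj M A x) by (exists y; left; exact Hp).
    assert (Hy : proj M A y) by (exists x; right; exact Hp).
    pose proof (Ha x Hx). pose proof (Ha y Hy). pose proof (HA x y Hp).
    apply Rmin_glb; lra.
  - destruct Hp as [Hp | Hp]; [| contradiction].
    pose proof (HA x y Hp). pose proof (Hlip x y'). pose proof (Hlip y y').
    apply Rmin_glb; lra.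
Qed.

End AddPair.

Lemma gamma_cyc_mon_add_pair (A : pairset M) (u v : pt M) (f : pt M -> R) :
  g <= 1 -> in_Lip0_ball M f ->
  (forall x y, A (x, y) -> g * d x y <= f x - f y) ->
  (forall x y, proj M A x -> proj M A y -> f y - f x + g * d u v <= d x u + d y v) ->
  gamma_cyc_mon M g (add_pair M A u v).
Proof.
  intros Hg Hf HA Hcross.
  destruct (exists_between (proj M A) (fun z => f z - d z v)
              (fun w => f w + cm_term M g u v w)) as [a Ha].
  - intros z w Hz Hw.
    enough (f z - d z v - f w <= cm_term M g u v w) by lra.
    pose proof (Hcross w z Hw Hz). pose proof (Defs.dist_sym M w u).
    pose proof (Lip0_ball_diff_le f Hf z w). pose proof (Defs.dist_tri M z v w).
    apply Rmin_glb; lra.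
  - exact (gamma_cyc_mon_of_potential _ (pair_potential u v f a)
             (pair_potential_step A u v f a Hg Hf HA Ha)).
Qed.

End CyclicMonotonicity.

Theorem lemma3p3 (M : PointedMetricSpace) (gamma : R) (A : pairset M)
  (u v : pt M) :
  0 < gamma <= 1 ->
  subset_tilde M A ->
  u <> v ->
  (gamma_cyc_mon M gamma (add_pair M A u v) <->
   exists f : pt M -> R,
     in_Lip0_ball M f /\
     (forall x y, A (x, y) -> mol M f x y >= gamma) /\
     (forall x y, proj M A x -> proj M A y ->
        f y - f x + gamma * mdist M u v <= mdist M x u + mdist M y v)).
Proof.
  intros [_ Hg] Hsub _. split.
  - intros Hcm.
    destruct (Lip0_ball_of_gamma_cyc_mon M gamma _ Hcm) as [f [Hf Hpair]].
    exists f. split; [exact Hf | split].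
    + intros x y Hxy. apply mol_ge_iff; [exact (Hsub _ Hxy) |].
      apply Hpair. left. exact Hxy.
    + intros x y _ _.
      pose proof (Hpair u v (or_intror eq_refl)).
      pose proof (Lip0_ball_diff_le M f Hf u x). pose proof (Defs.dist_sym M u x).
      pose proof (Lip0_ball_diff_le M f Hf y v). lra.
  - intros [f [Hf [Hmol Hcross]]].
    apply gamma_cyc_mon_add_pair with f; auto.
    intros x y Hxy. apply mol_ge_iff; [exact (Hsub _ Hxy) | exact (Hmol x y Hxy)].
Qed.
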